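(* The lattice $L_V(\mathbf{K}_1)$ of subvarieties of $\mathbf{K}_1$ is isomorphic to an $\omega+1$ chain.
   Context: A pseudocomplemented de Morgan algebra is $(L;\wedge,\vee,{}^\ast,{}^\prime,0,1)$ with bounded distributive lattice reduct, pseudocomplement ${}^\ast$ and de Morgan involution ${}^\prime$. $\mathbf{K}_1$ is the variety of such algebras satisfying $x\wedge x^{\prime\ast\prime}\le y\vee y^\ast$ (regularity), $x\wedge x'\le y\vee y'$ (Kleene), and $(x\wedge x^{\prime\ast})^{\prime\ast}=(x\wedge x^{\prime\ast})^{\prime\ast\prime\ast}$ (range $1$). $L_V(\mathbf{K}_1)$ is ordered by inclusion and includes the trivial variety. *)

Record pcdm := PCDM {
  car :> Type;
  meet : car -> car -> car;
  join : car -> car -> car;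
  star : car -> car;
  dm   : car -> car;
  bot  : car;
  top  : car;
  meetA : forall x y z, meet x (meet y z) = meet (meet x y) z;
  joinA : forall x y z, join x (join y z) = join (join x y) z;
  meetC : forall x y, meet x y = meet y x;
  joinC : forall x y, join x y = join y x;
  meet_absorb : forall x y, meet x (join x y) = x;
  join_absorb : forall x y, join x (meet x y) = x;
  meet_joinDr : forall x y z, meet x (join y z) = join (meet x y) (meet x z);
  meet_bot : forall x, meet bot x = bot;
  meet_top : forall x, meet top x = x;
  star_spec : forall x y, meet x y = bot <-> meet y (star x) = y;
  dmK : forall x, dm (dm x) = x;
  dm_join : forall x y, dm (join x y) = meet (dm x) (dm y);
  dm_bot : dm bot = top
}.

Definition le (A : pcdm) (x y : A) : Prop := meet A x y = x.

Definition inK1 (A : pcdm) : Prop :=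
  (* regularity axiom *)
  (forall x y : A, le A (meet A x (dm A (star A (dm A x)))) (join A y (star A y)))
  (* Kleene: x /\ x' <= y \/ y' *)
  /\ (forall x y : A, le A (meet A x (dm A x)) (join A y (dm A y)))
  (* range 1 axiom *)
  /\ (forall x : A,
        let u := meet A x (star A (dm A x)) in
        star A (dm A u) = star A (dm A (star A (dm A u)))).

Inductive term : Type :=
  | TVar : nat -> term
  | TMeet : term -> term -> term
  | TJoin : term -> term -> term
  | TStar : term -> term
  | TDm : term -> term
  | TZero : term
  | TOne : term.

Fixpoint eval (A : pcdm) (v : nat -> A) (t : term) : A :=
  match t with
  | TVar n => v n
  | TMeet s u => meet A (eval A v s) (eval A v u)
  | TJoin s u => join A (eval A v s) (eval A v u)
  | TStar s => star A (eval A v s)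
  | TDm s => dm A (eval A v s)
  | TZero => bot A
  | TOne => top A
  end.

Definition identity := (term * term)%type.

Definition satisfies (A : pcdm) (e : identity) : Prop :=
  forall v : nat -> A, eval A v (fst e) = eval A v (snd e).

Definition ModK1 (S : identity -> Prop) (A : pcdm) : Prop :=
  inK1 A /\ (forall e, S e -> satisfies A e).

(** A class of algebras is a subvariety of K1 iff it is the class of members of
    K1 satisfying some set of identities (Birkhoff).  Classes are compared
    extensionally. *)
Definition subvariety_K1 (V : pcdm -> Prop) : Prop :=
  exists S : identity -> Prop, forall A, V A <-> ModK1 S A.

(** * The chain omega+1: [Some n] is n, [None] is the top element omega. *)
Definition le_omega1 (i j : option nat) : Prop :=
  match i, j with
  | _, None => True
  | None, Some _ => False
  | Some m, Some n => m <= n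
  end.

(* An algebra of [K1] is separated by homomorphisms into the algebras [DB Z],
   two copies of the power set of [Z] stacked on each other.  The points [Z]
   come from prime filters: by the Kleene and regularity identities every
   prime filter [P] is an ultrafilter or has an ultrafilter as its de Morgan
   dual [{a | a' \notin P}], and by the range-1 identity the relation
   [dual M \subset N] is an equivalence on ultrafilters, whose classes give
   the homomorphisms.  A finitely generated subalgebra of [DB Z] is one of the
   finite algebras [D n] ([D 0] trivial, [D 1 = 2], [D n = DB] over [n - 1]
   points), which form a chain under embedding and are told apart by the
   identities [eid n] (Lee's identities for [n >= 2]).  So an identity failing in [A \in K1]
   fails in some [D n] satisfying all identities of [A], and a subvariety of
   [K1] is either [K1] or generated by the largest [D n] it contains. *)

From mathcomp Require Import ssreflect ssrfun ssrbool eqtype ssrnat seq fintype finfun.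
From mathcomp Require Import boolp classical_sets.
From Stdlib Require Import Classical.

Set Implicit Arguments.
Unset Strict Implicit.
Unset Printing Implicit Defensive.

Section PcdmTheory.
Variable A : pcdm.
Implicit Types x y z : A.

Lemma meet_idem x : meet A x x = x.
Proof. by have := meet_absorb A x (meet A x x); rewrite join_absorb. Qed.

Lemma le_refl x : le A x x.
Proof. exact: meet_idem. Qed.

Lemma le_trans y x z : le A x y -> le A y z -> le A x z.
Proof. by rewrite /le => xy yz; rewrite -xy -meetA yz. Qed.

Lemma le_antisym x y : le A x y -> le A y x -> x = y.
Proof. by rewrite /le => xy yx; rewrite -xy meetC. Qed.

Lemma le_meetl x y : le A (meet A x y) x.
Proof. by rewrite /le (meetC A x y) -meetA meet_idem. Qed.

Lemma le_meetr x y : le A (meet A x y) y.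
Proof. by rewrite /le -meetA meet_idem. Qed.

Lemma le_joinl x y : le A x (join A x y).
Proof. exact: meet_absorb. Qed.

Lemma le_joinr x y : le A y (join A x y).
Proof. rewrite joinC; exact: meet_absorb. Qed.

Lemma le_meet x y z : le A z x -> le A z y -> le A z (meet A x y).
Proof. by rewrite /le => zx zy; rewrite meetA zx zy. Qed.

Lemma le_join x y z : le A x z -> le A y z -> le A (join A x y) z.
Proof.
move=> xz yz; rewrite /le meetC meet_joinDr.
by rewrite meetC xz meetC yz.
Qed.

Lemma le0x x : le A (bot A) x.
Proof. exact: meet_bot. Qed.

Lemma lex1 x : le A x (top A).
Proof. by rewrite /le meetC meet_top. Qed.

Lemma lex0 x : le A x (bot A) -> x = bot A.
Proof. by move=> x0; apply: le_antisym x0 (le0x _). Qed.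

Lemma meetSl x x' y : le A x x' -> le A (meet A x y) (meet A x' y).
Proof. by move=> xx'; apply: le_meet (le_meetr _ _); apply: le_trans (le_meetl _ _) xx'. Qed.

Lemma dm_top : dm A (top A) = bot A.
Proof. by rewrite -(dm_bot A) dmK. Qed.

Lemma dm_meet x y : dm A (meet A x y) = join A (dm A x) (dm A y).
Proof. by rewrite -[join A _ _]dmK dm_join !dmK. Qed.

Lemma dm_le x y : le A x y -> le A (dm A y) (dm A x).
Proof.
by rewrite /le => xy; rewrite -xy dm_meet; apply: le_joinr.
Qed.

Lemma meet_star x : meet A x (star A x) = bot A.
Proof. by apply/(star_spec A x (star A x)); rewrite meet_idem. Qed.

Lemma le_star x y : meet A y x = bot A -> le A y (star A x).
Proof. by move=> yx0; apply/(star_spec A x y); rewrite meetC. Qed.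

Lemma le_starstar x : le A x (star A (star A x)).
Proof. exact/le_star/meet_star. Qed.

End PcdmTheory.

(* [DB Z] is the Boolean algebra of subsets of [Z] stacked on a second copy of
   itself: a pair [(U, V)] stands for [U] in the lower copy when [V] is empty
   and for [V] in the upper copy when [U] is all of [Z].  The de Morgan
   operation swaps the two copies, [(U, V)' = (~V, ~U)]. *)
Record dbool (Z : Type) := DBool {
  lo : Z -> Prop;
  hi : Z -> Prop;
  lo_hi : (forall z, lo z) \/ (forall z, ~ hi z) }.

Arguments DBool {Z}.

Section DoubledPowerset.
Variable Z : Type.
Implicit Types a b : dbool Z.

Lemma dbool_ext a b :
  (forall z, lo a z <-> lo b z) -> (forall z, hi a z <-> hi b z) -> a = b.
Proof.
case: a b => [U V UV] [U' V' UV'] /= eqU eqV.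
have eU : U = U' by apply: funext => z; apply: propext.
have eV : V = V' by apply: funext => z; apply: propext.
by subst; rewrite (Prop_irrelevance UV UV').
Qed.

Lemma eq_lo a b z : a = b -> lo a z <-> lo b z.
Proof. by move->. Qed.

Lemma eq_hi a b z : a = b -> hi a z <-> hi b z.
Proof. by move->. Qed.

Definition dmeet a b : dbool Z.
Proof.
refine (DBool (fun z => lo a z /\ lo b z) (fun z => hi a z /\ hi b z) _).
by case: (lo_hi a) (lo_hi b); firstorder.
Defined.

Definition djoin a b : dbool Z.
Proof.
refine (DBool (fun z => lo a z \/ lo b z) (fun z => hi a z \/ hi b z) _).
by case: (lo_hi a) (lo_hi b); firstorder.
Defined.

Definition dstar a : dbool Z.
Proof.
refine (DBool (fun z => ~ lo a z) (fun _ => forall w, ~ lo a w) _).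
by case: (classic (forall w, ~ lo a w)); firstorder.
Defined.

Definition ddm a : dbool Z.
Proof.
refine (DBool (fun z => ~ hi a z) (fun z => ~ lo a z) _).
by case: (lo_hi a); firstorder.
Defined.

Definition dbot : dbool Z :=
  DBool (fun _ => False) (fun _ => False) (or_intror (fun _ f => f)).

Definition dtop : dbool Z :=
  DBool (fun _ => True) (fun _ => True) (or_introl (fun _ => I)).

Lemma dstar_spec a b : dmeet a b = dbot <-> dmeet b (dstar a) = b.
Proof.
split=> [ab0|ba].
- have ab z : ~ (lo a z /\ lo b z) := proj1 (eq_lo z ab0).
  apply: dbool_ext => z /=; split=> [[]//|bz].
  + by split=> // az; apply: (ab z).
  + split=> // w aw.
    case: (lo_hi b) => [bfull|bempty]; last by case: (bempty z bz).
    exact: ab w (conj aw (bfull w)).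
- apply: dbool_ext => z /=; split=> // -[az bz].
  + by have [_ /(_ bz) [_ /(_ az)]] := eq_lo z ba.
  + have [_ /(_ bz) [_ /(_ z)]] := eq_hi z ba; apply.
    by case: (lo_hi a) => [afull|aempty]; [apply: afull | case: (aempty z az)].
Qed.

Definition DB : pcdm.
Proof.
refine (@PCDM (dbool Z) dmeet djoin dstar ddm dbot dtop _ _ _ _ _ _ _ _ _ dstar_spec _ _ _);
  move=> *; apply: dbool_ext => u /=; try tauto.
all: by split=> [|?]; [apply: NNPP | tauto].
Defined.

End DoubledPowerset.

Lemma DB_K1 Z : inK1 (DB Z).
Proof.
rewrite /inK1 /le /=; split; [|split] => [x y|x y|x];
  apply: dbool_ext => z /=; try tauto.
- split=> [[[xz nxz] _] | [xz nxz]]; first by [].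
  split=> //; case: (classic (hi y z)) => [yz|]; [left|by right].
  by case: (lo_hi y) => [yfull|yempty]; [apply: yfull | case: (yempty z yz)].
- split=> [[[xz nxz] _] | [xz nxz]]; first by [].
  by case: (lo_hi x) => [xfull|xempty]; [case: (nxz (xfull z)) | case: (xempty z xz)].
- split=> nnx nall.
  + apply: nnx => -[_ hall]; apply: nall => w; apply; split; first exact: NNPP (hall w).
    exact: hall.
  + apply: nnx => hall; apply: nall; split.
    * by apply: NNPP => nz; apply: (hall z) => -[].
    * by move=> w nw; apply: (hall w) => -[].
Qed.

Lemma dbool_top_hi Z (a : dbool Z) : (forall z, hi a z) -> a = dtop Z.
Proof.
move=> afull; apply: dbool_ext => z //=; split=> // _.
by case: (lo_hi a) => [|/(_ z (afull z))].
Qed.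

Record hom (A B : pcdm) (h : A -> B) : Prop := Hom {
  hom_meet : forall x y, h (meet A x y) = meet B (h x) (h y);
  hom_join : forall x y, h (join A x y) = join B (h x) (h y);
  hom_star : forall x, h (star A x) = star B (h x);
  hom_dm : forall x, h (dm A x) = dm B (h x);
  hom_bot : h (bot A) = bot B;
  hom_top : h (top A) = top B }.

Arguments hom : clear implicits.

Lemma eval_hom (A B : pcdm) (h : A -> B) :
  hom A B h -> forall v t, h (eval A v t) = eval B (h \o v) t.
Proof.
by case=> hM hJ hS hD h0 h1 v; elim => //= [s IHs u IHu|s IHs u IHu|s IHs|s IHs];
  rewrite ?hM ?hJ ?hS ?hD ?IHs ?IHu.
Qed.

Lemma satisfies_inj_hom (A B : pcdm) (h : A -> B) e :
  hom A B h -> injective h -> satisfies B e -> satisfies A e.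
Proof. by move=> hh hinj hB v; apply: hinj; rewrite !(eval_hom hh) hB. Qed.

Definition two : pcdm.
Proof.
refine (@PCDM bool andb orb negb negb false true _ _ _ _ _ _ _ _ _ _ _ _ _) => //.
all: by do ![case].
Defined.

Lemma two_K1 : inK1 two.
Proof. by rewrite /inK1 /le /=; split; [|split] => [[] []|[] []|[]]. Qed.

Section DBHoms.
Variable Z : Type.

Definition dconst (b : bool) : dbool Z := if b then dtop Z else dbot Z.

Lemma dconst_hom : hom two (DB Z) dconst.
Proof.
split=> //= [[] []|[] []|[]|[]] //; apply: dbool_ext => z /=; try tauto.
Qed.

Lemma dconst_inj : Z -> injective dconst.
Proof. by move=> z [] [] // /(eq_lo z) /= []; firstorder. Qed.

End DBHoms.

Section Pullback.
Variables (Y Z : Type) (p : Z -> Y).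

Definition dpull (a : dbool Y) : dbool Z.
Proof.
refine (DBool (fun z => lo a (p z)) (fun z => hi a (p z)) _).
by case: (lo_hi a) => H; [left|right] => z; apply: H.
Defined.

Hypothesis p_surj : forall y, exists z, p z = y.

Lemma dpull_hom : hom (DB Y) (DB Z) dpull.
Proof.
split=> //= [a b|a b|a|a]; apply: dbool_ext => z //=.
split=> [na w|na y]; first exact: na.
by have [w <-] := p_surj y; apply: na.
Qed.

Lemma dpull_inj : injective dpull.
Proof.
move=> a b ab; apply: dbool_ext => y; have [z <-] := p_surj y.
- exact: eq_lo z ab.
- exact: eq_hi z ab.
Qed.

End Pullback.

Lemma dpull_onto (Y Z : Type) (p : Z -> Y) (y : dbool Z) :
  (forall w, exists z, p z = w) ->
  (forall z z', p z = p z' -> (lo y z <-> lo y z') /\ (hi y z <-> hi y z')) ->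
  exists d, dpull p d = y.
Proof.
move=> p_surj yp.
pose U w := exists2 z, p z = w & lo y z; pose V w := exists2 z, p z = w & hi y z.
have UV : (forall w, U w) \/ (forall w, ~ V w).
  case: (lo_hi y) => [yfull|yempty]; [left=> w | right=> w [z _ /yempty //]].
  by have [z pz] := p_surj w; exists z.
exists (DBool U V UV).
apply: dbool_ext => z /=; split=> [[z' /yp [lo_eq hi_eq]]|yz]; try by exists z.
- exact: (proj1 lo_eq).
- exact: (proj1 hi_eq).
Qed.

Section Filters.
Local Open Scope classical_set_scope.
Variable A : pcdm.
Implicit Types (x y : A) (F G P : A -> Prop).

Record filter F : Prop := Filter {
  filter_top : F (top A);
  filter_meet : forall x y, F x -> F y -> F (meet A x y);
  filter_le : forall x y, F x -> le A x y -> F y }.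

Record prime_filter F : Prop := PrimeFilter {
  prime_filter_filter :> filter F;
  prime_filter_proper : ~ F (bot A);
  prime_filter_join : forall x y, F (join A x y) -> F x \/ F y }.

Record ultrafilter F : Prop := Ultrafilter {
  ultrafilter_filter :> filter F;
  ultrafilter_proper : ~ F (bot A);
  ultrafilter_star : forall x, F x \/ F (star A x) }.

Lemma filter_meetE F x y : filter F -> F (meet A x y) <-> F x /\ F y.
Proof.
move=> Ff; split=> [Fxy|[Fx Fy]]; last exact (filter_meet Ff Fx Fy).
by split; apply (filter_le Ff Fxy); [apply: le_meetl | apply: le_meetr].
Qed.

Lemma prime_filter_joinE P x y : prime_filter P -> P (join A x y) <-> P x \/ P y.
Proof.
move=> Pp; split=> [|[Px|Py]]; first exact: prime_filter_join.
- by apply (filter_le Pp Px); apply: le_joinl.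
- by apply (filter_le Pp Py); apply: le_joinr.
Qed.

Lemma principal_filter a : filter (le A a).
Proof.
split=> [|x y ax ay|x y ax xy]; [exact: lex1 | exact: le_meet | exact: le_trans xy].
Qed.

Definition adjoin F a : A -> Prop := fun t => exists2 g, F g & le A (meet A g a) t.

Lemma adjoin_filter F a : filter F -> filter (adjoin F a).
Proof.
case=> F1 FM Fle; split.
- by exists (top A) => //; apply: lex1.
- move=> x y [g Fg gx] [g' Fg' g'y]; exists (meet A g g'); first exact: FM.
  apply: le_meet.
  + exact: le_trans (meetSl _ (le_meetl _ _)) gx.
  + exact: le_trans (meetSl _ (le_meetr _ _)) g'y.
- by move=> x y [g Fg gx] xy; exists g => //; apply: le_trans xy.
Qed.

Lemma adjoin_sub F a x : F x -> adjoin F a x.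
Proof. by move=> Fx; exists x => //; apply: le_meetl. Qed.

Lemma adjoin_self F a : filter F -> adjoin F a a.
Proof. by case=> F1 _ _; exists (top A) => //; apply: le_meetr. Qed.

Lemma filter_bigcup (C : set (set A)) x0 :
  (forall G x, C G -> G x -> filter G) -> total_on C subset ->
  (\bigcup_(G in C) G) x0 -> filter (\bigcup_(G in C) G).
Proof.
move=> Cf Ctot [G0 CG0 G0x0]; split.
- by exists G0 => //; apply: filter_top (Cf _ _ CG0 G0x0).
- move=> x y [G CG Gx] [G' CG' G'y].
  have [GG'|G'G] := Ctot G G' CG CG'.
  + by exists G' => //; exact (filter_meet (Cf _ _ CG' G'y) (GG' x Gx) G'y).
  + by exists G => //; exact (filter_meet (Cf _ _ CG Gx) Gx (G'G y G'y)).
- by move=> x y [G CG Gx] xy; exists G => //; exact (filter_le (Cf _ _ CG Gx) Gx xy).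
Qed.

(* By Zorn's lemma; the empty set joins the family as the union of the empty
   chain. *)
Lemma filter_max_avoiding F b : filter F -> ~ F b ->
  exists G, [/\ filter G, forall x, F x -> G x, ~ G b &
    forall x, ~ G x -> exists2 g, G g & le A (meet A g x) b].
Proof.
move=> Ff Fb.
pose ok G := filter G /\ (forall x, F x -> G x) /\ ~ G b.
have [G [[G0|[Gf [FG Gb]]] Gmax]] : exists G, ((forall x, ~ G x) \/ ok G) /\
    forall G', G `<` G' -> ~ ((forall x, ~ G' x) \/ ok G').
- apply: Zorn_bigcup => C CP Ctot.
  have [[x [G CG Gx]]|C0] := classic (exists x, (\bigcup_(G in C) G) x); last first.
    by left=> x Cx; apply: C0; exists x.
  have okC G' : C G' -> forall y, G' y -> ok G'.
    by move=> CG' y G'y; case: (CP _ CG') => // /(_ y G'y).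
  right; split; last split.
  + by apply: (filter_bigcup (x0 := x)) => [G' y CG' /(okC _ CG' y) [] //|//|]; exists G.
  + by move=> y Fy; exists G => //; case: (okC _ CG x Gx) => _ [/(_ y Fy)].
  + by case=> G' CG' G'b; case: (okC _ CG' b G'b) => _ [_].
- exfalso; apply: (Gmax F); last by right.
  split=> [x /G0 //|FG]; apply: (G0 (top A)).
  by apply: FG; apply: filter_top Ff.
exists G; split=> // x Gx; apply: NNPP => nox.
apply: (Gmax (adjoin G x)).
- split=> [y|]; first exact: adjoin_sub.
  by move=> adjG; apply: Gx; apply: adjG; apply: adjoin_self.
- right; split; first exact: adjoin_filter.
  by split=> [y /FG /adjoin_sub //|[g Gg gxb]]; apply: nox; exists g.
Qed.

Lemma prime_filter_theorem F b : filter F -> ~ F b ->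
  exists P, [/\ prime_filter P, forall x, F x -> P x & ~ P b].
Proof.
move=> Ff Fb; have [G [Gf FG Gb Gmax]] := filter_max_avoiding Ff Fb.
exists G; split=> //; split=> // [G0|x y Gxy].
  by apply: Gb; exact (filter_le Gf G0 (le0x _)).
apply: NNPP => /not_or_and [/Gmax [g Gg gxb] /Gmax [g' Gg' g'yb]].
apply: Gb; apply (filter_le Gf (filter_meet Gf (filter_meet Gf Gg Gg') Gxy)).
rewrite meet_joinDr; apply: le_join.
- exact: le_trans (meetSl _ (le_meetl _ _)) gxb.
- exact: le_trans (meetSl _ (le_meetr _ _)) g'yb.
Qed.

Lemma ultrafilter_ext F : filter F -> ~ F (bot A) ->
  exists2 M, ultrafilter M & forall x, F x -> M x.
Proof.
move=> Ff F0; have [G [Gf FG G0 Gmax]] := filter_max_avoiding Ff F0.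
exists G => //; split=> // x; case: (classic (G x)) => [|/Gmax [g Gg gx0]]; first by left.
by right; apply (filter_le Gf Gg); apply/le_star/lex0.
Qed.

End Filters.

(** * Prime filters in [K1] and the representation by [DB Z] *)

Section PrimeFilters.
Variable A : pcdm.
Implicit Types (x y a : A) (P Q M N : A -> Prop).

Lemma ultrafilter_starE M x : ultrafilter M -> M (star A x) <-> ~ M x.
Proof.
case=> Mf M0 Mstar; split=> [Msx Mx|nMx]; last by case: (Mstar x).
by apply: M0; rewrite -(meet_star x); exact (filter_meet Mf Mx Msx).
Qed.

Lemma ultrafilter_prime M : ultrafilter M -> prime_filter M.
Proof.
move=> Mu; case: (Mu) => Mf M0 _; split=> // x y Mxy.
apply: NNPP => /not_or_and [/(ultrafilter_starE _ Mu) Msx /(ultrafilter_starE _ Mu) Msy].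
apply: M0; apply (filter_le Mf (filter_meet Mf (filter_meet Mf Msx Msy) Mxy)).
rewrite meet_joinDr; apply: le_join.
- apply: le_trans (meetSl _ (le_meetl _ _)) _.
  by rewrite meetC meet_star; apply: le_refl.
- apply: le_trans (meetSl _ (le_meetr _ _)) _.
  by rewrite meetC meet_star; apply: le_refl.
Qed.

Lemma ultrafilter_max M Q : ultrafilter M -> prime_filter Q ->
  (forall x, M x -> Q x) -> forall x, Q x -> M x.
Proof.
move=> Mu [Qf Q0 _] MQ x Qx; apply: NNPP => /(ultrafilter_starE _ Mu) /MQ Qsx.
by apply: Q0; rewrite -(meet_star x); exact (filter_meet Qf Qx Qsx).
Qed.

Lemma ultrafilter_adjoin M a : filter M -> ~ M (star A a) ->
  exists2 M', ultrafilter M' & (forall x, M x -> M' x) /\ M' a.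
Proof.
move=> Mf nMsa; have [|M' M'u MM'] := ultrafilter_ext (adjoin_filter a Mf).
  by case=> g Mg /lex0 ga0; apply: nMsa; apply (filter_le Mf Mg); apply: le_star.
exists M' => //; split=> [x Mx|]; apply: MM'; [exact: adjoin_sub | exact: adjoin_self].
Qed.

Lemma prime_nonultra_ext P : prime_filter P -> ~ ultrafilter P ->
  exists2 M, ultrafilter M & (forall x, P x -> M x) /\ exists2 x, M x & ~ P x.
Proof.
move=> [Pf P0 _] nPu.
have [a [nPa nPsa]] : exists a, ~ P a /\ ~ P (star A a).
  apply: NNPP => none; apply: nPu; split=> // a.
  by apply: NNPP => /not_or_and nPa; apply: none; exists a.
have [M Mu [PM Ma]] := ultrafilter_adjoin Pf nPsa.
by exists M => //; split=> //; exists a.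
Qed.

Definition dual P : A -> Prop := fun a => ~ P (dm A a).

Lemma dualK P a : dual (dual P) a <-> P a.
Proof. by rewrite /dual dmK; split=> [/NNPP|Pa]. Qed.

Lemma dual_sub P Q : (forall a, P a -> Q a) -> forall a, dual Q a -> dual P a.
Proof. by move=> PQ a nQ /PQ. Qed.

Lemma dual_prime P : prime_filter P -> prime_filter (dual P).
Proof.
case=> -[P1 PM Ple] P0 Pjoin; rewrite /dual; split; first split.
- by rewrite dm_top.
- by move=> x y nx ny; rewrite dm_meet => /Pjoin [].
- by move=> x y nx /dm_le xy Py; apply: nx; apply: Ple Py xy.
- by rewrite dm_bot.
- move=> x y; rewrite dm_join => nxy; apply: NNPP => /not_or_and [nx ny].
  by apply: nxy; apply: PM; apply: NNPP.
Qed.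

Lemma ultrafilter_star_dm M y : ultrafilter M -> M (star A (dm A y)) <-> dual M y.
Proof. exact: ultrafilter_starE. Qed.

Definition linked M N := forall a, dual M a -> N a.

Lemma linked_sym M N : linked M N -> linked N M.
Proof. by move=> MN a /(dual_sub MN) /(dualK M). Qed.

Hypothesis AK1 : inK1 A.

Lemma prime_dual_comparable P : prime_filter P ->
  (forall a, P a -> dual P a) \/ (forall a, dual P a -> P a).
Proof.
case: AK1 => _ [kleene _] Pp.
case: (classic (exists x, P x /\ P (dm A x))) => [[x [Px Pdx]]|none].
- right=> y dPy; have := filter_le Pp (filter_meet Pp Px Pdx) (kleene x y).
  by case/(prime_filter_join Pp).
- by left=> x Px Pdx; apply: none; exists x.
Qed.

Lemma no_prime_chain3 P Q R : prime_filter P -> prime_filter Q -> prime_filter R ->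
  (forall a, P a -> Q a) -> (forall a, Q a -> R a) ->
  (exists2 x, Q x & ~ P x) -> (exists2 y, R y & ~ Q y) -> False.
Proof.
case: AK1 => regular _ Pp Qp Rp PQ QR [x Qx nPx] [y Ry nQy].
have Qdsdx : Q (dm A (star A (dm A x))).
  apply: NNPP => /(dual_sub PQ) dPsdx.
  have dPdx : dual P (dm A x) by rewrite /dual dmK.
  have := filter_meet (dual_prime Pp) dPdx dPsdx.
  by rewrite meet_star /dual dm_bot; apply; apply: filter_top Pp.
have := filter_le Qp (filter_meet Qp Qx Qdsdx) (regular x y).
case/(prime_filter_join Qp) => // /QR Rsy.
by apply: (prime_filter_proper Rp); rewrite -(meet_star y); exact (filter_meet Rp Ry Rsy).
Qed.

Lemma prime_ultra_or_dual P : prime_filter P -> ultrafilter P \/ ultrafilter (dual P).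
Proof.
move=> Pp; case: (classic (ultrafilter P)) => [|nPu]; [by left | right].
have [M1 M1u [PM1 [x M1x nPx]]] := prime_nonultra_ext Pp nPu.
apply: NNPP => ndPu.
have [M2 M2u [dPM2 [y M2y ndPy]]] := prime_nonultra_ext (dual_prime Pp) ndPu.
apply: (no_prime_chain3 (P := dual M2) (Q := P) (R := M1)) => //.
- exact/dual_prime/ultrafilter_prime.
- exact: ultrafilter_prime.
- by move=> a /(dual_sub dPM2) /(dualK P).
- by exists (dm A y); [apply: NNPP | rewrite /dual dmK].
- by exists x.
Qed.

Lemma linked_refl M : ultrafilter M -> linked M M.
Proof.
move=> Mu; have Mp := ultrafilter_prime Mu.
case: (prime_dual_comparable Mp) => // Mdual.
exact: ultrafilter_max Mu (dual_prime Mp) Mdual.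
Qed.

(* The range-1 identity, applied to [(t^* )'], turns [t \in dual M1] into
   [t^** \in dual M2]. *)
Lemma linked_trans M1 M2 M3 :
  ultrafilter M1 -> ultrafilter M2 -> ultrafilter M3 ->
  linked M1 M2 -> linked M2 M3 -> linked M1 M3.
Proof.
move=> M1u M2u M3u l12 l23 t dM1t; apply: NNPP => nM3t.
case: AK1 => _ [_ /(_ (dm A (star A t)))] /=; rewrite dmK.
set u := meet A _ _ => range1.
have dM1p := dual_prime (ultrafilter_prime M1u).
have dM1u : dual M1 u.
  apply: (filter_meet dM1p).
  + by rewrite /dual dmK (ultrafilter_starE _ M1u) => /(_ (linked_refl M1u dM1t)).
  + by apply (filter_le dM1p dM1t); apply: le_starstar.
move: dM1u; rewrite -(ultrafilter_star_dm _ M1u) range1.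
move/(ultrafilter_star_dm _ M1u)/l12/(ultrafilter_star_dm _ M2u) => dM2u.
have dM2sst : dual M2 (star A (star A t)).
  by apply (filter_le (dual_prime (ultrafilter_prime M2u)) dM2u); apply: le_meetr.
move/l23/(ultrafilter_starE _ M3u): dM2sst; apply.
exact/(ultrafilter_starE _ M3u).
Qed.

End PrimeFilters.

Section Representation.
Variables (A : pcdm) (AK1 : inK1 A) (M0 : A -> Prop).
Hypothesis M0u : ultrafilter M0.

Definition linked_class := {M : A -> Prop | ultrafilter M /\ linked M0 M}.

Lemma linked_class_linked (M N : linked_class) : linked (sval M) (sval N).
Proof.
case: M N => [M [Mu l0M]] [N [Nu l0N]] /=.
exact (linked_trans AK1 Mu M0u Nu (linked_sym l0M) l0N).
Qed.

Definition represent (x : A) : dbool linked_class.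
Proof.
refine (DBool (fun M => sval M x) (fun M => dual (sval M) x) _).
case: (classic (exists M : linked_class, dual (sval M) x)) => [[M dMx]|none]; [left|right].
- by move=> N; apply: linked_class_linked dMx.
- by move=> M dMx; apply: none; exists M.
Defined.

Lemma represent_hom : hom A (DB linked_class) represent.
Proof.
have Mu (M : linked_class) : ultrafilter (sval M) by case: M => ? [].
have Mp M := ultrafilter_prime (Mu M).
have dMp M := dual_prime (Mp M).
split=> [x y|x y|x|x||]; apply: dbool_ext => M /=.
- exact: filter_meetE (Mp M).
- exact: filter_meetE (dMp M).
- exact: prime_filter_joinE (Mp M).
- exact: prime_filter_joinE (dMp M).
- exact: ultrafilter_starE (Mu M).
- split=> [dMsx N|all].
    by apply/(ultrafilter_starE _ (Mu N)); apply: linked_class_linked dMsx.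
  apply: NNPP => ndMsx.
  have [N Nu [dMN Nx]] := ultrafilter_adjoin (dMp M) ndMsx.
  have l0N := linked_trans AK1 M0u (Mu M) Nu (proj2 (svalP M)) dMN.
  exact: all (exist _ N (conj Nu l0N)) Nx.
- by rewrite /dual; split=> [Mdx []|/NNPP].
- by rewrite /dual dmK.
- by split=> // /(prime_filter_proper (Mp M)).
- by rewrite /dual dm_bot; split=> // nM1; apply: nM1; apply: filter_top (Mp M).
- by split=> // _; apply: filter_top (Mp M).
- by rewrite /dual dm_top; split=> // _; apply: prime_filter_proper (Mp M).
Qed.

End Representation.

Lemma K1_hom_separating (A : pcdm) (a b : A) : inK1 A -> a <> b ->
  exists Z (h : A -> dbool Z), hom A (DB Z) h /\ h a <> h b.
Proof.
move=> AK1; wlog nab : a b / ~ le A a b.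
  move=> sep ab; case: (classic (le A a b)) => [ab_le|nab]; last exact: sep nab ab.
  have [Z [h [hh hba]]] : exists Z (h : A -> dbool Z), hom A (DB Z) h /\ h b <> h a.
    by apply: sep => [ba_le|/esym //]; apply: ab; apply: le_antisym.
  by exists Z, h; split=> // /esym.
move=> _; have [P [Pp aP nPb]] := prime_filter_theorem (principal_filter a) nab.
have Pa : P a by apply: aP; apply: le_refl.
case: (prime_ultra_or_dual AK1 Pp) => [Pu|dPu].
- exists (linked_class P), (represent AK1 Pu); split; first exact: represent_hom.
  by move/(eq_lo (exist _ P (conj Pu (linked_refl AK1 Pu)))) => /= [/(_ Pa)].
- exists (linked_class (dual P)), (represent AK1 dPu); split; first exact: represent_hom.
  move/(eq_hi (exist _ (dual P) (conj dPu (linked_refl AK1 dPu)))) => /=.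
  by rewrite !dualK => -[/(_ Pa)].
Qed.

(** * Subalgebras of [DB X] *)

Section Subalgebras.
Variable X : Type.
Implicit Types (R : dbool X -> Prop) (S T : X -> Prop) (y : dbool X).

Record subalgebra R : Prop := Subalgebra {
  sub_bot : R (dbot X);
  sub_top : R (dtop X);
  sub_meet : forall a b, R a -> R b -> R (dmeet a b);
  sub_join : forall a b, R a -> R b -> R (djoin a b);
  sub_star : forall a, R a -> R (dstar a);
  sub_dm : forall a, R a -> R (ddm a) }.

Definition lower S : dbool X := DBool S (fun _ => False) (or_intror (fun _ f => f)).

Definition middle : dbool X := lower (fun _ => True).

Lemma lower_ext S T : (forall x, S x <-> T x) -> lower S = lower T.
Proof. by move=> ST; apply: dbool_ext. Qed.

Lemma subalgebra_bot_top R y : subalgebra R -> ~ R middle -> R y ->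
  y = dbot X \/ y = dtop X.
Proof.
move=> Rs nRm Ry.
have no_lower a : R a -> (exists z, lo a z) -> (forall z, ~ hi a z) -> False.
  move=> Ra [z az] nha; apply: nRm.
  have -> : middle = djoin a (dstar a).
    apply: dbool_ext => x /=; split=> //; first by move=> _; apply: classic.
    by case=> [/nha|/(_ z az)].
  exact: sub_join Rs _ _ Ra (sub_star Rs Ra).
case: (classic (exists z, hi y z)) => [[z yz]|nhy].
- have yfull : forall w, lo y w.
    by case: (lo_hi y) => // /(_ z yz).
  case: (classic (forall w, hi y w)) => [yhfull|/not_all_ex_not [w nyw]].
    by right; apply: dbool_ext.
  by case: (no_lower _ (sub_dm Rs Ry)); [exists w | move=> x /= []].
- case: (classic (exists z, lo y z)) => [ylo|nly].
    by case: (no_lower _ Ry ylo) => x yx; apply: nhy; exists x.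
  by left; apply: dbool_ext => x /=; split=> // yx; [apply: nly | apply: nhy]; exists x.
Qed.

Variable R : dbool X -> Prop.
Hypotheses (Rs : subalgebra R) (Rm : R middle).

Lemma sub_lower_meet S T : R (lower S) -> R (lower T) -> R (lower (fun x => S x /\ T x)).
Proof.
move=> RS RT; have -> : lower (fun x => S x /\ T x) = dmeet (lower S) (lower T).
  by apply: dbool_ext => x /=; tauto.
exact: sub_meet.
Qed.

Lemma sub_lower_join S T : R (lower S) -> R (lower T) -> R (lower (fun x => S x \/ T x)).
Proof.
move=> RS RT; have -> : lower (fun x => S x \/ T x) = djoin (lower S) (lower T).
  by apply: dbool_ext => x /=; tauto.
exact: sub_join.
Qed.

Lemma sub_lower_not S : R (lower S) -> R (lower (fun x => ~ S x)).
Proof.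
move=> RS; case: (classic (exists z, S z)) => [[z Sz]|nS].
  have -> : lower (fun x => ~ S x) = dstar (lower S).
    by apply: dbool_ext => x /=; split=> // /(_ z Sz).
  exact: sub_star.
by rewrite (@lower_ext _ (fun _ => True)) // => x; split=> // _ Sx; apply: nS; exists x.
Qed.

Lemma sub_lower_const (P : Prop) : R (lower (fun _ => P)).
Proof.
case: (classic P) => [p|np]; first by rewrite (@lower_ext _ (fun _ => True)).
rewrite (@lower_ext _ (fun _ => False)) //.
have -> : lower (fun _ => False) = dbot X by apply: dbool_ext.
exact: sub_bot.
Qed.

Lemma sub_lower_lo y : R y -> R (lower (lo y)).
Proof.
move=> Ry; have -> : lower (lo y) = dmeet y middle by apply: dbool_ext => x /=; tauto.
exact: sub_meet.
Qed.

Lemma sub_lower_hi y : R y -> R (lower (hi y)).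
Proof.
move=> Ry; have Rnhy : R (lower (fun x => ~ hi y x)).
  have -> : lower (fun x => ~ hi y x) = dmeet (ddm y) middle.
    by apply: dbool_ext => x /=; tauto.
  by apply: sub_meet => //; apply: sub_dm.
rewrite (@lower_ext _ (fun x => ~ ~ hi y x)); first exact: sub_lower_not.
by move=> x; split=> [hx /(_ hx)|/NNPP].
Qed.

Lemma sub_lower_if S (b : bool) : R (lower S) -> R (lower (fun x => if b then S x else ~ S x)).
Proof. by case: b => RS //; apply: sub_lower_not. Qed.

Lemma sub_lower_all (I : eqType) (r : seq I) (S : I -> X -> Prop) :
  (forall i, R (lower (S i))) -> R (lower (fun x => forall i, i \in r -> S i x)).
Proof.
move=> RS; elim: r => [|i r IHr].
  by rewrite (@lower_ext _ (fun _ => True)) // => x; split.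
rewrite (@lower_ext _ (fun x => S i x /\ forall j, j \in r -> S j x)).
  exact: sub_lower_meet.
move=> x; split=> [Sx|[Six Srx] j].
  by split=> [|j jr]; apply: Sx; rewrite inE ?eqxx ?jr ?orbT.
by rewrite inE => /orP [/eqP -> //|/Srx].
Qed.

Lemma sub_lower_ex (I : eqType) (r : seq I) (S : I -> X -> Prop) :
  (forall i, R (lower (S i))) -> R (lower (fun x => exists2 i, i \in r & S i x)).
Proof.
move=> RS; elim: r => [|i r IHr].
  rewrite (@lower_ext _ (fun _ => False)); first exact: sub_lower_const.
  by move=> x; split=> // -[].
rewrite (@lower_ext _ (fun x => S i x \/ exists2 j, j \in r & S j x)).
  exact: sub_lower_join.
move=> x; split=> [[j]|[Six|[j jr Sjx]]]; last by exists j; rewrite // inE jr orbT.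
  by rewrite inE => /orP [/eqP ->|jr Sjx]; [left | right; exists j].
by exists i; rewrite ?inE ?eqxx.
Qed.

(* The atoms of the Boolean algebra generated by [lo (g i)] and [hi (g i)],
   indexed through the finite type of realized signatures. *)
Lemma sub_partition (x0 : X) N (g : 'I_N -> dbool X) : (forall i, R (g i)) ->
  exists k (rho : X -> 'I_k), [/\ forall i, exists x, rho x = i,
    forall i, R (lower (fun x => rho x = i)) &
    forall x x', rho x = rho x' ->
      forall i, (lo (g i) x <-> lo (g i) x') /\ (hi (g i) x <-> hi (g i) x')].
Proof.
move=> Rg.
have asbool_ifE (P : Prop) (b : bool) : `[< P >] = b <-> (if b then P else ~ P).
  by case: b; case: asboolP => p; split.
pose sig x : {ffun 'I_N -> bool * bool} := [ffun i => (`[< lo (g i) x >], `[< hi (g i) x >])].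
pose realized := [pred s | `[< exists x, sig x = s >]].
have real_sig x : sig x \in realized by apply/asboolP; exists x.
pose rho x := enum_rank_in (real_sig x0) (sig x).
have rhoK x : enum_val (rho x) = sig x by rewrite enum_rankK_in.
have rhoE x i : rho x = i <-> sig x = enum_val i.
  by split=> [<-|sigx]; [rewrite rhoK | rewrite /rho sigx enum_valK_in].
exists #|realized|, rho; split.
- move=> i; have /asboolP [x sigx] := enum_valP i.
  by exists x; apply/rhoE.
- move=> i; pose s := enum_val i.
  rewrite (@lower_ext _ (fun x => forall j, j \in enum 'I_N ->
      (if (s j).1 then lo (g j) x else ~ lo (g j) x) /\
      (if (s j).2 then hi (g j) x else ~ hi (g j) x))).
    apply: sub_lower_all => j; apply: sub_lower_meet; apply: sub_lower_if;
      [exact: sub_lower_lo | exact: sub_lower_hi].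
  move=> x; rewrite rhoE -/s; split=> [<- j _|sigx].
    by rewrite ffunE /=; split; apply/asbool_ifE.
  apply/ffunP => j; rewrite ffunE; have [lo_j hi_j] := sigx j (mem_enum _ j).
  by case: (s j) lo_j hi_j => b c /= /asbool_ifE -> /asbool_ifE ->.
move=> x x' /(congr1 enum_val); rewrite !rhoK => /ffunP sigxx' i.
have := sigxx' i; rewrite !ffunE; case=> lo_eq hi_eq.
by split; apply: asbool_eq_equiv.
Qed.

Lemma sub_dpull k (rho : X -> 'I_k) :
  (forall i, R (lower (fun x => rho x = i))) -> forall d, R (dpull rho d).
Proof.
move=> Rblock.
have Rpre (P : 'I_k -> Prop) : R (lower (fun x => P (rho x))).
  rewrite (@lower_ext _ (fun x => exists2 i, i \in enum 'I_k & P i /\ rho x = i)).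
    by apply: sub_lower_ex => i; apply: sub_lower_meet => //; apply: sub_lower_const.
  by move=> x; split=> [Px|[i _ [Pi ->]] //]; exists (rho x); rewrite ?mem_enum.
move=> d; case: (classic (forall i, ~ hi d i)) => [dempty|].
  have -> : dpull rho d = lower (fun x => lo d (rho x)).
    by apply: dbool_ext => x /=; split=> // /dempty.
  exact: Rpre.
case: (lo_hi d) => [dfull _|//].
have -> : dpull rho d = ddm (lower (fun x => ~ hi d (rho x))).
  by apply: dbool_ext => x /=; split=> [hx []|/NNPP //] //.
exact (sub_dm Rs (Rpre (fun i => ~ hi d i))).
Qed.

End Subalgebras.

(** * The chain [D n] *)

Definition D (n : nat) : pcdm :=
  match n with 0 => DB 'I_0 | 1 => two | k.+2 => DB 'I_k.+1 end.

Lemma D_K1 n : inK1 (D n).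
Proof. by case: n => [|[|n]]; [exact: DB_K1 | exact: two_K1 | exact: DB_K1]. Qed.

Lemma D0_satisfies e : satisfies (D 0) e.
Proof. by move=> v; apply: dbool_ext => -[]. Qed.

Lemma D_embedding m n : 0 < m <= n ->
  exists j : D m -> D n, hom (D m) (D n) j /\ injective j.
Proof.
case: m n => [|[|k]] [|[|l]] //= kl.
- by exists id; do !split.
- by exists (@dconst _); split; [apply: dconst_hom | apply: dconst_inj ord0].
- rewrite !ltnS in kl.
  pose p (i : 'I_l.+1) : 'I_k.+1 := inord (minn i k).
  have p_surj y : exists i, p i = y.
    have yl : y < l.+1 by apply: leq_trans (ltn_ord y) _.
    exists (Ordinal yl); apply: val_inj; rewrite /= inordK ?ltnS ?geq_minr //.
    by apply/minn_idPl; rewrite /= -ltnS.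
  by exists (dpull p); split; [apply: dpull_hom | apply: dpull_inj].
Qed.

Lemma D_satisfies_le m n e : m <= n -> satisfies (D n) e -> satisfies (D m) e.
Proof.
case: m => [_ _|m mn]; first exact: D0_satisfies.
by have [j [jh jinj]] := D_embedding (m := m.+1) mn; apply: satisfies_inj_hom jh jinj.
Qed.

(** * Lee's identities *)

Fixpoint tmeets (f : nat -> term) (n : nat) : term :=
  if n is n'.+1 then TMeet (tmeets f n') (f n') else TOne.

Fixpoint tjoins (f : nat -> term) (n : nat) : term :=
  if n is n'.+1 then TJoin (tjoins f n') (f n') else TZero.

(* Lee's term [(x_0 /\ .. /\ x_(m-1))^* \/ \/_(i < m) (x_0 /\ .. x_i^* .. /\ x_(m-1))^*],
   whose joinand for [i = m] is the first one.  In [DB Z] it is [1] exactly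
   when one of the [m + 1] cells cut out by [x_0, ..., x_(m-1)] is empty, so
   [lee m = 1] holds iff [Z] has at most [m] points. *)
Definition lee (m : nat) : term :=
  tjoins (fun i => TStar (tmeets (fun j => if j == i then TStar (TVar j) else TVar j) m)) m.+1.

Definition lee_cell Z (v : nat -> dbool Z) m i (z : Z) : Prop :=
  forall j, j < m -> (lo (v j) z <-> j != i).

Section LeeEval.
Variables (Z : Type) (v : nat -> dbool Z).

Lemma lo_tmeets f n z :
  lo (eval (DB Z) v (tmeets f n)) z <-> forall i, i < n -> lo (eval (DB Z) v (f i)) z.
Proof.
elim: n => [|n IHn] /=; first by split=> // _ [].
rewrite IHn; split=> [[fn fnn] i|fn]; last by split=> [i /ltnW|]; apply: fn.
by rewrite ltnS leq_eqVlt => /orP [/eqP ->|/fn].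
Qed.

Lemma hi_tjoins f n z :
  hi (eval (DB Z) v (tjoins f n)) z <-> exists2 i, i < n & hi (eval (DB Z) v (f i)) z.
Proof.
elim: n => [|n IHn] /=; first by split=> // -[].
rewrite IHn; split=> [[[i ilt hi_i]|hi_n]|[i]].
- by exists i => //; apply: ltnW.
- by exists n.
- by rewrite ltnS leq_eqVlt => /orP [/eqP ->|ilt hi_i]; [right | left; exists i].
Qed.

Lemma hi_lee m z :
  hi (eval (DB Z) v (lee m)) z <-> exists2 i, i <= m & forall w, ~ lee_cell v m i w.
Proof.
rewrite /lee hi_tjoins; split=> -[i im nocell]; exists i => // w cell; apply: (nocell w).
- apply/lo_tmeets => j jm; have := cell j jm; rewrite /= fun_if /=.
  by case: eqP => _ cellj; [move/cellj | apply/cellj].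
- move=> j jm; have := (proj1 (lo_tmeets _ _ _) cell) j jm; rewrite /= fun_if /=.
  by case: eqP => _ cellj; split=> // [/cellj|_].
Qed.

End LeeEval.

Lemma lee_cell_inj Z (v : nat -> dbool Z) m i i' w : i <= m -> i' <= m ->
  lee_cell v m i w -> lee_cell v m i' w -> i = i'.
Proof.
have key k k' : k < m -> lee_cell v m k w -> lee_cell v m k' w -> k = k'.
  move=> km ck ck'; apply/eqP; apply: contraT => kk'.
  have lo_k : lo (v k) w by apply/(ck' k km).
  by have := proj1 (ck k km) lo_k; rewrite eqxx.
move=> im i'm ci ci'; case: (ltnP i m) => [lt_im|mi]; first exact: key ci ci'.
case: (ltnP i' m) => [lt_i'm|mi']; first by rewrite (key _ _ lt_i'm ci' ci).
by apply: anti_leq; rewrite (leq_trans im mi') (leq_trans i'm mi).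
Qed.

Lemma lee_holds m (v : nat -> dbool 'I_m) : eval (DB 'I_m) v (lee m) = dtop 'I_m.
Proof.
apply: dbool_top_hi => z; apply/hi_lee; apply: NNPP => nocell.
have cells (i : 'I_m.+1) : exists w, lee_cell v m i w.
  apply: NNPP => nw; apply: nocell; exists i; first by rewrite -ltnS.
  by move=> w cw; apply: nw; exists w.
have [p pP] := choice cells.
have p_inj : injective p.
  have le_m (k : 'I_m.+1) : k <= m by rewrite -ltnS ltn_ord.
  move=> i i' pii'; apply: val_inj.
  by apply: (lee_cell_inj (le_m i) (le_m i') (pP i)); rewrite pii'.
by have := leq_card p p_inj; rewrite !card_ord ltnn.
Qed.

Lemma lee_fails m : exists v, eval (DB 'I_m.+1) v (lee m) <> dtop 'I_m.+1.
Proof.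
exists (fun j => lower (fun z : 'I_m.+1 => val z != j)).
move=> /(eq_hi ord0) [_ /(_ I)]; case/hi_lee => i im /(_ (inord i)); apply=> j jm /=.
by rewrite inordK // eq_sym.
Qed.

Definition eid (n : nat) : identity :=
  match n with
  | 0 => (TVar 0, TVar 1)
  | 1 => (TJoin (TVar 0) (TStar (TVar 0)), TOne)
  | k.+2 => (lee k.+1, TOne)
  end.

Lemma D_satisfies_eid n : satisfies (D n) (eid n).
Proof.
case: n => [|[|k]] v; [exact: D0_satisfies | by rewrite /=; case: (v 0) | exact: lee_holds].
Qed.

Lemma D_fails_eid n : ~ satisfies (D n.+1) (eid n).
Proof.
case: n => [|[|k]] /=.
- by move/(_ (fun i => i == 0)).
- move/(_ (fun _ => lower (fun _ => True))) => /(eq_hi ord0) /= [_ /(_ I)].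
  by case=> // /(_ ord0).
- by have [v /[swap] /(_ v)] := lee_fails k.+1.
Qed.

Lemma D_fails_eid_lt n m : n < m -> ~ satisfies (D m) (eid n).
Proof. by move=> nm /(D_satisfies_le nm); apply: D_fails_eid. Qed.

(** * Subvarieties of [K1] *)

Lemma DB_finite_subalgebra X (x0 : X) (R : dbool X -> Prop) N (g : 'I_N -> dbool X) :
  subalgebra R -> (forall i, R (g i)) ->
  exists n (j : D n -> dbool X), [/\ hom (D n) (DB X) j, injective j,
    forall d, R (j d) & forall i, exists d, j d = g i].
Proof.
move=> Rs Rg; case: (classic (R (middle X))) => [Rm|nRm].
- have [[|k] [rho [rho_surj Rblock rho_fib]]] := sub_partition Rs Rm x0 Rg.
    by case: (rho x0).
  exists k.+2, (dpull rho); split.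
  + exact: dpull_hom.
  + exact: dpull_inj.
  + exact (sub_dpull Rs Rm Rblock).
  + by move=> i; apply: dpull_onto => // x x' /rho_fib.
- exists 1, (@dconst X); split.
  + exact: dconst_hom.
  + exact: dconst_inj x0.
  + by case; [apply: sub_top | apply: sub_bot].
  + by move=> i; case: (subalgebra_bot_top Rs nRm (Rg i)) => ->; [exists false | exists true].
Qed.

Fixpoint var_bound (t : term) : nat :=
  match t with
  | TVar n => n.+1
  | TMeet s u | TJoin s u => maxn (var_bound s) (var_bound u)
  | TStar s | TDm s => var_bound s
  | TZero | TOne => 0
  end.

Lemma eval_eq_on (A : pcdm) (v w : nat -> A) t :
  (forall i, i < var_bound t -> v i = w i) -> eval A v t = eval A w t.
Proof.
elim: t => //= [n|s IHs u IHu|s IHs u IHu|s IHs|s IHs] vw; rewrite ?IHs ?IHu //;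
  try by move=> i it; apply: vw; rewrite leq_max it ?orbT.
exact: vw.
Qed.

Lemma hom_image_subalgebra (A : pcdm) Z (h : A -> dbool Z) :
  hom A (DB Z) h -> subalgebra (fun y => exists a, h a = y).
Proof.
case=> hM hJ hS hD h0 h1; split.
- by exists (bot A).
- by exists (top A).
- by move=> _ _ [a <-] [b <-]; exists (meet A a b).
- by move=> _ _ [a <-] [b <-]; exists (join A a b).
- by move=> _ [a <-]; exists (star A a).
- by move=> _ [a <-]; exists (dm A a).
Qed.

Lemma K1_fails_in_D (A : pcdm) e : inK1 A -> ~ satisfies A e ->
  exists n, ~ satisfies (D n) e /\ forall e', satisfies A e' -> satisfies (D n) e'.
Proof.
move=> AK1 /not_all_ex_not [v nev].
have [Z [h [hh hne]]] := K1_hom_separating AK1 nev.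
have [[z0 _]|nZ] := classic (exists z : Z, True); last first.
  by case: hne; apply: dbool_ext => z; case: nZ; exists z.
pose N := maxn (var_bound e.1) (var_bound e.2).
have [n [j [jh jinj jR jg]]] := DB_finite_subalgebra z0 (hom_image_subalgebra hh)
  (g := fun i : 'I_N => h (v i)) (fun i => ex_intro _ (v i) erefl).
exists n; split.
- have [w wP] : {w : nat -> D n & forall k, k < N -> j (w k) = h (v k)}.
    apply: (@choice _ _ (fun k d => k < N -> j d = h (v k))) => k.
    case: (ltnP k N) => [kN|]; last by exists (bot (D n)).
    by have [d jd] := jg (Ordinal kN); exists d.
  have jeval t : var_bound t <= N -> j (eval (D n) w t) = h (eval A v t).
    move=> tN; rewrite (eval_hom jh) (eval_hom hh); apply: (@eval_eq_on (DB Z)) => k kt /=.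
    by apply: wP; apply: leq_trans kt tN.
  by move/(_ w) => Dew; apply: hne; rewrite -!jeval ?leq_maxl ?leq_maxr ?Dew.
- move=> e' Ae' w; apply: jinj; rewrite !(eval_hom jh).
  have [u uP] : {u : nat -> A & forall k, h (u k) = j (w k)}.
    by apply: (@choice _ _ (fun k a => h a = j (w k))) => k; apply: jR.
  have -> : j \o w = h \o u by apply: funext => k; rewrite /= uP.
  by rewrite -!(eval_hom hh) Ae'.
Qed.

Lemma ModK1_D n : ModK1 (satisfies (D n)) (D n).
Proof. by split=> //; apply: D_K1. Qed.

Lemma ModK1_D_le m n :
  (forall A, ModK1 (satisfies (D m)) A -> ModK1 (satisfies (D n)) A) <-> m <= n.
Proof.
split=> [mn|mn A [AK1 Am]]; last by split=> // e /(D_satisfies_le mn) /Am.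
rewrite leqNgt; apply/negP => nm.
by case: (mn _ (ModK1_D m)) => _ /(_ _ (@D_satisfies_eid n)); apply: D_fails_eid_lt.
Qed.

Lemma ModK1_None S A : (forall e, ~ S e) -> ModK1 S A <-> inK1 A.
Proof. by move=> S0; split=> [[]//|AK1]; split=> // e /S0. Qed.

Lemma K1_not_ModK1_D n : ~ (forall A, inK1 A -> ModK1 (satisfies (D n)) A).
Proof.
by case/(_ _ (D_K1 n.+1)) => _ /(_ _ (@D_satisfies_eid n)); apply: D_fails_eid.
Qed.

Lemma subvariety_K1_classification S :
  (forall A, ModK1 S A <-> inK1 A) \/
  exists p, forall A, ModK1 S A <-> ModK1 (satisfies (D p)) A.
Proof.
case: (classic (exists m, exists2 e, S e & ~ satisfies (D m) e)) => [exm|none]; last first.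
  left=> A; split=> [[]//|AK1]; split=> // e Se; apply: NNPP => nAe.
  by have [n [nDe _]] := K1_fails_in_D AK1 nAe; apply: none; exists n, e.
have exm' : exists m, `[< exists2 e, S e & ~ satisfies (D m) e >].
  by case: exm => m ?; exists m; apply/asboolP.
right; case: (ex_minnP exm') => -[|p] /asboolP [e0 Se0 nDe0] m_min.
  by case: nDe0; apply: D0_satisfies.
exists p => A; split=> -[AK1 AS]; split=> // e De; apply: NNPP => nAe.
- have [n [nDe DA]] := K1_fails_in_D AK1 nAe.
  have pn : p < n.
    by rewrite ltnNge; apply/negP => np; apply: nDe; apply: D_satisfies_le np De.
  by apply: nDe0; apply: D_satisfies_le pn _; apply: DA; apply: AS.
- have [n [nDe DA]] := K1_fails_in_D AK1 nAe.
  have np : n <= p.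
    rewrite leqNgt; apply/negP => /D_fails_eid_lt nDp.
    by apply: nDp; apply: DA; apply: AS; apply: D_satisfies_eid.
  have : p < n by apply: m_min; apply/asboolP; exists e.
  by rewrite ltnNge np.
Qed.

Theorem theorem5p3 :
  exists F : option nat -> (identity -> Prop),
    (forall i j : option nat,
        le_omega1 i j <-> (forall A : pcdm, ModK1 (F i) A -> ModK1 (F j) A)) /\
    (forall V : pcdm -> Prop, subvariety_K1 V ->
        exists i : option nat, forall A : pcdm, V A <-> ModK1 (F i) A).
Proof.
exists (fun i => if i is Some n then satisfies (D n) else fun _ => False); split.
- case=> [m|] [n|] /=.
  + by rewrite ModK1_D_le; split=> /leP.
  + by split=> // _ A [].
  + split=> // H; apply: (K1_not_ModK1_D (n := n)) => A AK1.
    by apply: H; split.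
  + by [].
- move=> V [S VS]; case: (subvariety_K1_classification S) => [all|[p Sp]].
  + by exists None => A; rewrite VS all (ModK1_None _ (fun _ f => f)).
  + by exists (Some p) => A; rewrite VS Sp.
Qed.
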